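(* Let $\mu_0\in\mathbb{C}$ and let $\xi=(\mu_0+z^2)\partial_z+(\bar\mu_0+\bar z^2)\partial_{\bar z}$ be a GCKV in canonical form. The subgroup of $SL(2,\mathbb{C})$ consisting of those $\mathbb{A}$ with $\chi^{\mathbb{A}}_\star(\xi)=\xi$ is $$\mathbb{A}_{\mu_0}=\left\{\begin{pmatrix}\delta&-\gamma\mu_0\\ \gamma&\delta\end{pmatrix}:\ \gamma,\delta\in\mathbb{C},\ \delta^2+\mu_0\gamma^2=1\right\}.$$
   Context: $\mathbb{E}^2$ is the Euclidean plane with Cartesian coordinates $\{x,y\}$ and $z=\frac12(x-iy)$. A GCKV with parameters $\mu\in\mathbb{C}^3$ is $(\mu_0+\mu_1z+\frac12\mu_2z^2)\partial_z+\text{c.c.}$; it is canonical when $\mu_1=0,\mu_2=2$. For $\mathbb{A}=\begin{pmatrix}\alpha&\beta\\ \gamma&\delta\end{pmatrix}\in SL(2,\mathbb{C})$, $\chi^{\mathbb{A}}$ is the Möbius transformation $z\mapsto(\alpha z+\beta)/(\gamma z+\delta)$ and $\chi^{\mathbb{A}}_\star$ denotes push-forward of vector fields (the push-forward of a GCKV is again a GCKV). *)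

From HB Require Import structures.
From mathcomp Require Import all_boot all_order all_algebra.
From mathcomp Require Import complex.
From mathcomp Require Import reals.
Set Implicit Arguments. Unset Strict Implicit. Unset Printing Implicit Defensive.
Import Order.TTheory GRing.Theory Num.Theory.
Local Open Scope ring_scope.

Section Defs.
Variable R : realType.
Local Notation C := (R[i]).

(* Holomorphic coefficient of the GCKV with parameters (mu0,mu1,mu2):
   (mu0 + mu1 z + 1/2 mu2 z^2) d_z + c.c. *)
Definition gckv_coef (mu0 mu1 mu2 : C) (z : C) : C :=
  mu0 + mu1 * z + (mu2 / 2%:R) * z ^+ 2.

Definition canonical_gckv_coef (mu0 : C) : C -> C := gckv_coef mu0 0 2%:R.

Definition mx_alpha (A : 'M[C]_2) : C := A ord0 ord0.
Definition mx_beta  (A : 'M[C]_2) : C := A ord0 ord_max.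
Definition mx_gamma (A : 'M[C]_2) : C := A ord_max ord0.
Definition mx_delta (A : 'M[C]_2) : C := A ord_max ord_max.

Definition mx2 (a b c d : C) : 'M[C]_2 :=
  \matrix_(i < 2, j < 2)
    if i == ord0 then (if j == ord0 then a else b) else (if j == ord0 then c else d).

Definition in_SL2 (A : 'M[C]_2) : Prop := \det A = 1.

Definition mobius (A : 'M[C]_2) (z : C) : C :=
  (mx_alpha A * z + mx_beta A) / (mx_gamma A * z + mx_delta A).
Definition mobius_deriv (A : 'M[C]_2) (z : C) : C :=
  (mx_alpha A * mx_delta A - mx_beta A * mx_gamma A)
    / (mx_gamma A * z + mx_delta A) ^+ 2.

(* chi^A_* (V d_z + c.c.) = V d_z + c.c. :  the push-forward of the field at
   chi^A(z) equals the field at chi^A(z), for every z off the pole, i.e.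
   d chi^A_z (X(z)) = X(chi^A(z)).  Both the d_z and the d_{bar z} components
   are required (the latter is the complex conjugate of the former). *)
Definition pushforward_fixes (A : 'M[C]_2) (V : C -> C) : Prop :=
  forall z : C, mx_gamma A * z + mx_delta A != 0 ->
    V (mobius A z) = mobius_deriv A z * V z /\
    (V (mobius A z))^* = (mobius_deriv A z)^* * (V z)^*.

End Defs.

(** For [A = [[a, b], [c, d]]] with [ad - bc = 1], the Möbius map has
    derivative [1/(cz + d)^2], so after clearing denominators the invariance
    of [(mu0 + z^2) d_z] reads [(az + b)^2 + mu0 (cz + d)^2 = z^2 + mu0] off
    the pole.  A quadratic vanishing at three points is zero, so this
    amounts to [a^2 + mu0 c^2 = 1], [ab + mu0 cd = 0], [b^2 + mu0 d^2 = mu0];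
    together with [ad - bc = 1] these force [a = d] and [b = - c mu0]. *)
From HB Require Import structures.
From mathcomp Require Import all_boot all_order all_algebra.
From mathcomp Require Import complex.
From mathcomp Require Import reals.
From mathcomp Require Import ring.
Import Order.TTheory GRing.Theory Num.Theory.
Local Open Scope ring_scope.

Lemma quadratic_eq0_at3 {F : idomainType} {p q r : F} (u v w : F) :
  u != v -> u != w -> v != w ->
  p * u ^+ 2 + q * u + r = 0 -> p * v ^+ 2 + q * v + r = 0 ->
  p * w ^+ 2 + q * w + r = 0 ->
  [/\ p = 0, q = 0 & r = 0].
Proof.
move=> neq_uv neq_uw neq_vw ru rv rw.
have secant x y : x != y -> p * x ^+ 2 + q * x + r = 0 ->
    p * y ^+ 2 + q * y + r = 0 -> p * (x + y) + q = 0.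
  move=> neq_xy rx ry.
  have : (x - y) * (p * (x + y) + q) = 0.
    by rewrite -[RHS](subrr 0) -{1}rx -ry; ring.
  by move/eqP; rewrite mulf_eq0 subr_eq0 (negbTE neq_xy) => /eqP.
have suv := secant _ _ neq_uv ru rv; have suw := secant _ _ neq_uw ru rw.
have p0 : p = 0.
  have : (v - w) * p = 0 by rewrite -[RHS](subrr 0) -{1}suv -suw; ring.
  by move/eqP; rewrite mulf_eq0 subr_eq0 (negbTE neq_vw) => /eqP.
have q0 : q = 0 by move: suv; rewrite p0 mul0r add0r.
by split=> //; move: ru; rewrite p0 q0 !mul0r !add0r.
Qed.

Lemma quadratic_eq0_off_line {F : numFieldType} {p q r c d : F} :
  (c != 0) || (d != 0) ->
  (forall z, c * z + d != 0 -> p * z ^+ 2 + q * z + r = 0) ->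
  [/\ p = 0, q = 0 & r = 0].
Proof.
move=> cd_neq0 vanish.
have neq_nat (m n : nat) : m != n -> m%:R != n%:R :> F by rewrite eqr_nat.
have [c0 | c_neq0] := eqVneq c 0.
  have off_line z : c * z + d != 0.
    by move: cd_neq0; rewrite c0 eqxx mul0r add0r.
  by apply: (quadratic_eq0_at3 1%:R 2%:R 3%:R);
    rewrite ?neq_nat ?vanish.
pose pt (k : F) := (k - d) / c.
have ptK k : c * pt k + d = k by rewrite /pt; field.
have pt_inj (m n : nat) : m != n -> pt m%:R != pt n%:R.
  move=> mn; apply: contra (neq_nat _ _ mn) => /eqP e.
  by rewrite -[m%:R]ptK -[n%:R]ptK e.
by apply: (quadratic_eq0_at3 (pt 1%:R) (pt 2%:R) (pt 3%:R));
  rewrite ?pt_inj ?vanish ?ptK ?pnatr_eq0.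
Qed.

Lemma sl2_stabilizer_entries {F : comPzRingType} {mu0 a b c d : F} :
  a * d - b * c = 1 -> a ^+ 2 + mu0 * c ^+ 2 = 1 ->
  a * b + mu0 * c * d = 0 -> b ^+ 2 + mu0 * d ^+ 2 = mu0 ->
  a = d /\ b = - (c * mu0).
Proof.
move=> det1 e2 e1 e0; split.
- transitivity (a * (a * d - b * c) + c * (a * b + mu0 * c * d)).
    by rewrite det1 e1 mulr1 mulr0 addr0.
  by transitivity (d * (a ^+ 2 + mu0 * c ^+ 2)); [ring | rewrite e2 mulr1].
- transitivity (b * (a * d - b * c)); first by rewrite det1 mulr1.
  transitivity (d * (a * b + mu0 * c * d) - c * (b ^+ 2 + mu0 * d ^+ 2)).
    by ring.
  by rewrite e1 e0 mulr0 sub0r.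
Qed.

Section ComplexMobius.
Variable R : realType.
Local Notation C := R[i].

Lemma mx2_eta (A : 'M[C]_2) :
  A = mx2 (mx_alpha A) (mx_beta A) (mx_gamma A) (mx_delta A).
Proof.
apply/matrixP => i j; rewrite !mxE /mx_alpha /mx_beta /mx_gamma /mx_delta.
by case: i => [[|[|]]] //= ?; case: j => [[|[|]]] //= ?; congr (A _ _);
  apply/val_inj.
Qed.

Lemma mx2_inj (a b c d a' b' c' d' : C) :
  mx2 a b c d = mx2 a' b' c' d' -> [/\ a = a', b = b', c = c' & d = d'].
Proof.
move=> e; have entry i j : mx2 a b c d i j = mx2 a' b' c' d' i j by rewrite e.
move: (entry ord0 ord0) (entry ord0 ord_max) (entry ord_max ord0).
by move: (entry ord_max ord_max); rewrite !mxE.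
Qed.

Lemma det_mx2 (a b c d : C) : \det (mx2 a b c d) = a * d - b * c.
Proof.
rewrite (expand_det_row _ ord0) !big_ord_recl big_ord0 /cofactor !det_mx11.
rewrite !mxE /= /bump /= !expr0 !expr1; ring.
Qed.

Lemma canonical_gckv_coefE (mu0 z : C) :
  canonical_gckv_coef mu0 z = mu0 + z ^+ 2.
Proof.
by rewrite /canonical_gckv_coef /gckv_coef divff ?pnatr_eq0 // mul0r addr0 mul1r.
Qed.

Lemma pushforward_fixesE (A : 'M[C]_2) (V : C -> C) :
  pushforward_fixes A V <->
  forall z, mx_gamma A * z + mx_delta A != 0 ->
    V (mobius A z) = mobius_deriv A z * V z.
Proof.
split=> [fixV z /fixV [] // | fixV z /fixV e].
by split=> //; rewrite e rmorphM.
Qed.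

Lemma pushforward_fixes_canonical_mx2 (mu0 a b c d : C) :
  a * d - b * c = 1 ->
  pushforward_fixes (mx2 a b c d) (canonical_gckv_coef mu0) <->
  forall z, c * z + d != 0 ->
    (a * z + b) ^+ 2 + mu0 * (c * z + d) ^+ 2 = z ^+ 2 + mu0.
Proof.
move=> det1; rewrite pushforward_fixesE /mobius /mobius_deriv.
rewrite /mx_alpha /mx_beta /mx_gamma /mx_delta !mxE /= det1.
suff fixes_at z : c * z + d != 0 ->
    (canonical_gckv_coef mu0 ((a * z + b) / (c * z + d)) =
       1 / (c * z + d) ^+ 2 * canonical_gckv_coef mu0 z) <->
    ((a * z + b) ^+ 2 + mu0 * (c * z + d) ^+ 2 = z ^+ 2 + mu0).
  by split=> fixV z pole_neq0; apply/(fixes_at z pole_neq0)/fixV.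
move=> pole_neq0; rewrite !canonical_gckv_coefE.
have -> : mu0 + ((a * z + b) / (c * z + d)) ^+ 2 =
    ((a * z + b) ^+ 2 + mu0 * (c * z + d) ^+ 2) / (c * z + d) ^+ 2 by field.
have -> : 1 / (c * z + d) ^+ 2 * (mu0 + z ^+ 2) =
    (z ^+ 2 + mu0) / (c * z + d) ^+ 2 by rewrite mul1r mulrC addrC.
have inv_neq0 : ((c * z + d) ^+ 2)^-1 != 0 by rewrite invr_eq0 expf_neq0.
by split=> [/(mulIf inv_neq0) | ->].
Qed.

End ComplexMobius.

Theorem corollary7p3 (R : realType) (mu0 : R[i]) (A : 'M[R[i]]_2) :
  in_SL2 A ->
  (pushforward_fixes A (canonical_gckv_coef mu0) <->
   exists gamma delta : R[i],
     delta ^+ 2 + mu0 * gamma ^+ 2 = 1 /\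
     A = mx2 delta (- (gamma * mu0)) gamma delta).
Proof.
rewrite [A]mx2_eta /in_SL2 det_mx2.
move: (mx_alpha A) (mx_beta A) (mx_gamma A) (mx_delta A) => a b c d det1.
rewrite pushforward_fixes_canonical_mx2 //.
split=> [fixV | [g [dl [norm1 /mx2_inj [-> -> -> ->]]]] z _]; last first.
  by transitivity ((dl ^+ 2 + mu0 * g ^+ 2) * (z ^+ 2 + mu0));
    [ring | rewrite norm1 mul1r].
have cd_neq0 : (c != 0) || (d != 0).
  rewrite -negb_and; apply: contra_eqN det1 => /andP[/eqP-> /eqP->].
  by rewrite !mulr0 subr0 eq_sym oner_eq0.
have coefs_vanish z : c * z + d != 0 ->
    (a ^+ 2 + mu0 * c ^+ 2 - 1) * z ^+ 2 + 2%:R * (a * b + mu0 * c * d) * z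
    + (b ^+ 2 + mu0 * d ^+ 2 - mu0) = 0.
  move=> /fixV e; rewrite -(subrr (z ^+ 2 + mu0)) -{1}e; ring.
have [e2 e1 e0] := quadratic_eq0_off_line cd_neq0 coefs_vanish.
move/eqP: e2; move/eqP: e0; rewrite !subr_eq0 => /eqP e0 /eqP e2.
move/eqP: e1; rewrite mulf_eq0 pnatr_eq0 /= => /eqP e1.
have [ad bc] := sl2_stabilizer_entries det1 e2 e1 e0.
by exists c, d; rewrite -ad -bc; split.
Qed.
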